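(* Let $\alpha,\beta,\gamma,\Delta\in\mathbb{C}$ with $(\Delta,\beta)\neq(0,0)$. Consider extensions of conformal $\widetilde{\mathrm{SV}}$-modules $$0\to V(\alpha,\beta,\Delta)\to E\to\mathbb{C}c_\gamma\to0,$$ realized as $E=\mathbb{C}[\partial]v_\Delta\oplus\mathbb{C}c_\gamma$ (as vector spaces) with $\mathbb{C}[\partial]v_\Delta\cong V(\alpha,\beta,\Delta)$ a submodule and $$L_\lambda c_\gamma=f(\partial,\lambda)v_\Delta,\ M_\lambda c_\gamma=g(\partial,\lambda)v_\Delta,\ Y_\lambda c_\gamma=h(\partial,\lambda)v_\Delta,\ N_\lambda c_\gamma=k(\partial,\lambda)v_\Delta,\ \partial c_\gamma=\gamma c_\gamma+a(\partial)v_\Delta,$$ where $f,g,h,k\in\mathbb{C}[\partial,\lambda]$, $a\in\mathbb{C}[\partial]$. Nontrivial extensions of this form exist if and only if $\alpha+\gamma=0$, $\beta=0$ and $\Delta=1$. In this case $\dim_{\mathbb{C}}\mathrm{Ext}(\mathbb{C}c_{-\alpha},V(\alpha,0,1))=1$, and the only (up to a scalar) nontrivial extension is given by $g=h=k=0$ and $f(\partial,\lambda)=a(\partial)=a_0\in\mathbb{C}^*$.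
   Context: A conformal module over a Lie conformal algebra $R$ is a $\mathbb{C}[\partial]$-module $V$ with $a\mapsto a_\lambda\in\mathrm{End}_{\mathbb{C}}(V)\otimes\mathbb{C}[\lambda]$ satisfying $[a_\lambda,b_\mu]=[a_\lambda b]_{\lambda+\mu}$ and $(\partial a)_\lambda=[\partial,a_\lambda]=-\lambda a_\lambda$. $\widetilde{\mathrm{SV}}$ is the Lie conformal algebra that is the free $\mathbb{C}[\partial]$-module with basis $L,M,Y,N$ whose nonzero $\lambda$-brackets (up to skew-symmetry) are $[L_\lambda L]=(\partial+2\lambda)L$, $[L_\lambda Y]=(\partial+\tfrac32\lambda)Y$, $[L_\lambda M]=(\partial+\lambda)M$, $[Y_\lambda Y]=(\partial+2\lambda)M$, $[L_\lambda N]=(\partial+\lambda)N$, $[N_\lambda M]=2M$, $[N_\lambda Y]=Y$. $V(\alpha,\beta,\Delta)=\mathbb{C}[\partial]v_\Delta$ with $L_\lambda v_\Delta=(\partial+\alpha+\Delta\lambda)v_\Delta$, $N_\lambda v_\Delta=\beta v_\Delta$, $M_\lambda v_\Delta=Y_\lambda v_\Delta=0$. $\mathbb{C}c_\gamma$ is the one-dimensional module with $\partial c_\gamma=\gamma c_\gamma$ and zero $\lambda$-actions. An extension of $W$ by $V$ is an exact sequence $0\to V\to E\to W\to0$ of conformal modules; equivalence via a module map of middle terms compatible with identities; trivial means equivalent to the direct sum. $\mathrm{Ext}(W,V)$ is the space of extension cocycles modulo coboundaries. *)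

From HB Require Import structures.
From mathcomp Require Import all_boot all_order all_algebra.
From mathcomp Require Import complex.
From mathcomp Require Import Rstruct.
Set Implicit Arguments. Unset Strict Implicit. Unset Printing Implicit Defensive.
Import Order.TTheory GRing.Theory Num.Theory.
Local Open Scope ring_scope.

Definition C : fieldType := (complex.complex Rdefinitions.R).

Inductive gen := gL | gM | gY | gN.
Definition gens : seq gen := [:: gL; gM; gY; gN].

(* A bracket [x_lam y] = sum_z P_{xyz}(d, lam) z is
   encoded by the coefficient functions P_{xyz}(d, lam) (d = \partial).
   [listed_br x y] says that [x_lam y] is among the brackets given in the
   paper; the remaining ones are obtained by skew-symmetry
   [y_lam x] = - [x_{-lam-d} y], all others are zero. *)
Definition listed_br (x y : gen) : bool :=
  match x, y with
  | gL, gL | gL, gY | gL, gM | gY, gY | gL, gN | gN, gM | gN, gY => true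
  | _, _ => false
  end.

Definition base_br (x y z : gen) (d l : C) : C :=
  match x, y, z with
  | gL, gL, gL => d + 2%:R * l
  | gL, gY, gY => d + (3%:R / 2%:R) * l
  | gL, gM, gM => d + l
  | gY, gY, gM => d + 2%:R * l
  | gL, gN, gN => d + l
  | gN, gM, gM => 2%:R
  | gN, gY, gY => 1
  | _, _, _ => 0
  end.

Definition br (x y z : gen) (d l : C) : C :=
  if listed_br x y then base_br x y z d l
  else if listed_br y x then - base_br y x z d (- l - d)
  else 0.

(* The extension E = C[d] v_Delta (+) C c_gamma; an element p(d) v + t c is
   the pair (p, t). *)
Definition E := ({poly C} * C)%type.

(* The cocycle data (f, g, h, k, a): f, g, h, k in C[d, lam] are elements of
   {poly {poly C}}: polynomials in lam (outer variable) with coefficients in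
   C[d] (inner variable 'X); a in C[d]. *)
Record extdata := ExtData {
  ext_f : {poly {poly C}};
  ext_g : {poly {poly C}};
  ext_h : {poly {poly C}};
  ext_k : {poly {poly C}};
  ext_a : {poly C} }.

Definition cocyc (dt : extdata) (x : gen) : {poly {poly C}} :=
  match x with gL => ext_f dt | gM => ext_g dt | gY => ext_h dt | gN => ext_k dt end.

(* action of x_lam on v_Delta in V(alpha, beta, Delta) (coefficient of v) *)
Definition phiV (al be De : C) (x : gen) (l : C) : {poly C} :=
  match x with
  | gL => 'X + (al + De * l)%:P
  | gN => be%:P
  | _ => 0
  end.

Definition Dop (ga : C) (dt : extdata) (e : E) : E :=
  ('X * e.1 + e.2 *: ext_a dt, ga * e.2).

(* the action of x_lam on E, evaluated at lam = l:
   x_lam (p(d) v + t c) = p(d + lam) x_lam v + t F_x(d, lam) v *)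
Definition act (al be De : C) (dt : extdata) (x : gen) (l : C) (e : E) : E :=
  ((e.1 \Po ('X + l%:P)) * phiV al be De x l + e.2 *: (cocyc dt x).[l%:P], 0).

(* [x_lam y]_{lam+mu} acting on e: (q(d) z)_nu = q(-nu) z_nu *)
Definition bract (al be De : C) (dt : extdata) (x y : gen) (l m : C) (e : E) : E :=
  \sum_(z <- gens) br x y z (- (l + m)) l *: act al be De dt z (l + m) e.

(* E is a conformal SV~-module:
   [d, x_lam] = - lam x_lam  and  [x_lam, y_mu] = [x_lam y]_{lam+mu},
   as identities of operators on E, for all values lam = l, mu = m. *)
Definition is_ext (al be ga De : C) (dt : extdata) : Prop :=
  (forall (x : gen) (l : C) (e : E),
      Dop ga dt (act al be De dt x l e) - act al be De dt x l (Dop ga dt e)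
      = - (l *: act al be De dt x l e))
  /\ (forall (x y : gen) (l m : C) (e : E),
      act al be De dt x l (act al be De dt y m e)
        - act al be De dt y m (act al be De dt x l e)
      = bract al be De dt x y l m e).

Definition ext_equiv (al be ga De : C) (d1 d2 : extdata) : Prop :=
  exists Phi : E -> E,
    [/\ forall (s : C) (e1 e2 : E), Phi (s *: e1 + e2) = s *: Phi e1 + Phi e2,
        forall p : {poly C}, Phi (p, 0) = (p, 0),
        forall e : E, (Phi e).2 = e.2,
        forall e : E, Phi (Dop ga d1 e) = Dop ga d2 (Phi e)
      & forall (x : gen) (l : C) (e : E),
          Phi (act al be De d1 x l e) = act al be De d2 x l (Phi e)].

(* the direct sum V(alpha,beta,Delta) (+) C c_gamma *)
Definition zero_ext : extdata := ExtData 0 0 0 0 0.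

Definition ext_trivial (al be ga De : C) (dt : extdata) : Prop :=
  ext_equiv al be ga De dt zero_ext.

Definition std_ext (a0 : C) : extdata := ExtData (a0%:P)%:P 0 0 0 a0%:P.

From HB Require Import structures.
From mathcomp Require Import all_boot all_order all_algebra.
From mathcomp Require Import complex.
From mathcomp Require Import Rstruct.
From mathcomp Require Import ring.
Import Order.TTheory GRing.Theory Num.Theory.
Local Open Scope ring_scope.

(* Write phi_x(d, lam) for the action of x_lam on v and F_x for the cocycle
   (F_L = f, F_M = g, ...).  Applied to c, the relation [d, x_lam] = -lam x_lam
   says (d + lam - gamma) F_x(d, lam) = a(d + lam) phi_x(d, lam).  Dividing,
   a = (d - gamma) q + a(gamma); replacing c by c + q(d) v (a coboundary) kills
   q, leaving (d + lam - gamma) F_x = a(gamma) phi_x.  Evaluating at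
   d = gamma - lam, a(gamma) <> 0 forces phi_L = d + lam - gamma and phi_N = 0,
   i.e. alpha + gamma = 0, Delta = 1, beta = 0; then F_L = a(gamma) and the
   other F_x vanish.  Conversely a(gamma) is invariant under equivalence, so
   the extensions with a(gamma) <> 0 are not trivial. *)

Lemma prod_ext (u v : E) : u.1 = v.1 -> u.2 = v.2 -> u = v.
Proof. by case: u v => [? ?] [? ?] /= -> ->. Qed.

Lemma scaleCE (s t : C) : s *: t = s * t.
Proof. by []. Qed.

Lemma comp_polyXaddC (p : {poly C}) (l m : C) :
  (p \Po ('X + m%:P)) \Po ('X + l%:P) = p \Po ('X + (l + m)%:P).
Proof. by rewrite -comp_polyA comp_polyD comp_polyX comp_polyC polyCD addrA. Qed.

Section Equivalence.

Context {al be ga De : C}.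

Lemma ext_equiv_shift (d1 d2 : extdata) (p : {poly C}) :
    ext_a d1 - ext_a d2 = ('X - ga%:P) * p ->
    (forall x l, (cocyc d1 x).[l%:P] - (cocyc d2 x).[l%:P]
                 = (p \Po ('X + l%:P)) * phiV al be De x l) ->
  ext_equiv al be ga De d1 d2.
Proof.
move=> /eqP; rewrite subr_eq => /eqP a1E cocyc1E.
exists (fun e => (e.1 + e.2 *: p, e.2)); split=> //.
- by move=> s [u1 t1] [u2 t2]; apply: prod_ext => //=; rewrite scaleCE -!mul_polyC; ring.
- by move=> u /=; rewrite scale0r addr0.
- by move=> [u t]; apply: prod_ext => //=; rewrite a1E -!mul_polyC; ring.
- move=> x l [u t]; apply: prod_ext => //=.
  move/eqP: (cocyc1E x l); rewrite subr_eq => /eqP ->.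
  by rewrite scale0r addr0 comp_polyD comp_polyZ -!mul_polyC; ring.
Qed.

Lemma ext_equiv_horner_a (d1 d2 : extdata) :
  ext_equiv al be ga De d1 d2 -> (ext_a d1).[ga] = (ext_a d2).[ga].
Proof.
move=> [Phi [Phi_lin Phi_V Phi_quot Phi_D _]].
set q := (Phi (0, 1)).1.
have Phi_c : Phi (0, 1) = (q, 1) by apply: prod_ext; rewrite // Phi_quot.
have Dc_split : Dop ga d1 (0, 1) = ga *: (0, 1) + (ext_a d1, 0).
  by apply: prod_ext; rewrite /= ?(mulr0, scale1r, scaler0, add0r, addr0).
have := congr1 fst (Phi_D (0, 1)).
rewrite Dc_split Phi_lin Phi_V Phi_c /= scale1r => /(congr1 (horner^~ ga)).
by rewrite !hornerE => /addrI.
Qed.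

End Equivalence.

Section Classification.

Context {al be ga De : C} {dt : extdata}.
Hypothesis dtP : is_ext al be ga De dt.

Local Notation a0 := (ext_a dt).[ga].
Local Notation q := (ext_a dt %/ ('X - ga%:P)).
Local Notation phi := (phiV al be De).

Lemma is_ext_cocycE x l :
  ('X + (l - ga)%:P) * (cocyc dt x).[l%:P] = (ext_a dt \Po ('X + l%:P)) * phi x l.
Proof.
have [Dcomm _] := dtP; have := congr1 fst (Dcomm x l (0, 1)).
rewrite /= comp_poly0 mul0r mulr0 !add0r scale0r addr0 !scale1r mulr1 -!mul_polyC.
move/eqP; rewrite -subr_eq0 => /eqP cE.
by apply/eqP; rewrite -subr_eq0 -cE; apply/eqP; ring.
Qed.

Lemma cocyc_shiftE x l :
  ('X + (l - ga)%:P) * ((cocyc dt x).[l%:P] - (q \Po ('X + l%:P)) * phi x l)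
    = a0%:P * phi x l.
Proof.
have aE : ext_a dt \Po ('X + l%:P) = (q \Po ('X + l%:P)) * ('X + (l - ga)%:P) + a0%:P.
  rewrite {1}(divp_eq (ext_a dt) ('X - ga%:P)) modp_XsubC.
  by rewrite comp_polyD comp_polyM comp_polyB comp_polyX !comp_polyC polyCB; ring.
by rewrite mulrBr is_ext_cocycE aE; ring.
Qed.

Lemma phiV_root x l : a0 != 0 -> (phi x l).[ga - l] = 0.
Proof.
move=> a0_neq0; have /(congr1 (horner^~ (ga - l))) := cocyc_shiftE x l.
rewrite !hornerM hornerD hornerX !hornerC (_ : ga - l + (l - ga) = 0) ?mul0r; last by ring.
by move/esym/eqP; rewrite mulf_eq0 (negbTE a0_neq0) => /eqP.
Qed.

Lemma horner_ext_a_neq0_params : a0 != 0 -> [/\ al + ga = 0, be = 0 & De = 1].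
Proof.
move=> a0_neq0; have phiL l := phiV_root gL l a0_neq0.
have := phiL 0; have := phiL 1; have := phiV_root gN 0 a0_neq0.
rewrite /= !(hornerD, hornerX, hornerC) => -> hL1 hL0; split=> //.
- by rewrite -hL0; ring.
- apply/eqP; rewrite -subr_eq0; apply/eqP.
  rewrite (_ : De - 1 = ga - 1 + (al + De * 1) - (ga - 0 + (al + De * 0))); last by ring.
  by rewrite hL1 hL0 subrr.
Qed.

Lemma std_ext_cocycE x l :
  ('X + (l - ga)%:P) * (cocyc (std_ext a0) x).[l%:P] = a0%:P * phi x l.
Proof.
have [-> | /horner_ext_a_neq0_params [alE -> ->]] := eqVneq a0 0.
  by case: x => /=; rewrite ?hornerC ?horner0 !(mulr0, mul0r).
have -> : al = - ga by apply/eqP; rewrite -subr_eq0 opprK alE.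
by case: x => /=; rewrite ?hornerC ?horner0 ?mulr0 // mul1r; ring.
Qed.

Lemma ext_equiv_std : ext_equiv al be ga De dt (std_ext a0).
Proof.
apply: (@ext_equiv_shift al be ga De dt (std_ext a0) q).
  by rewrite /= {1}(divp_eq (ext_a dt) ('X - ga%:P)) modp_XsubC addrK mulrC.
move=> x l; apply: (mulfI (monic_neq0 (monicXaddC (l - ga)))).
by rewrite mulrBr std_ext_cocycE -cocyc_shiftE; ring.
Qed.

End Classification.

Lemma std_ext_is_ext (al a0 : C) : is_ext al 0 (- al) 1 (std_ext a0).
Proof.
split=> [x l [p t] | x y l m [p t]].
  apply: prod_ext => /=; last by rewrite ?mulr0 ?scaler0 ?subr0 ?oppr0.
  case: x; rewrite /= ?comp_polyD ?comp_polyM ?comp_polyZ ?comp_polyX ?comp_polyC;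
    by rewrite ?hornerC ?horner0 -?mul_polyC; ring.
rewrite /bract /gens !big_cons big_nil.
apply: prod_ext; last by rewrite /= !scaler0 !addr0 subrr.
case: x; case: y; rewrite /br /= ?hornerC ?horner0 ?(mulr0, scaler0, scale0r, addr0, add0r);
  rewrite ?(polyC0, mul1r, mul0r, subr0, subrr);
  rewrite ?comp_polyD ?comp_polyM ?comp_polyZ ?comp_polyXaddC ?comp_polyX;
  rewrite ?comp_polyC ?comp_poly0 ?comp_polyD ?comp_polyX ?comp_polyC ?(addrC m l);
  by rewrite -?mul_polyC; ring.
Qed.

Lemma std_ext0 : std_ext 0 = zero_ext.
Proof. by rewrite /std_ext !polyC0. Qed.

Lemma std_ext_nontrivial (al be ga De a0 : C) :
  a0 != 0 -> ~ ext_trivial al be ga De (std_ext a0).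
Proof. by move=> a0_neq0 /ext_equiv_horner_a; rewrite /= hornerC horner0; apply/eqP. Qed.

Theorem theorem5p4 (al be ga De : C) :
  (De, be) != (0, 0) ->
  ((exists dt : extdata, is_ext al be ga De dt /\ ~ ext_trivial al be ga De dt)
     <-> [/\ al + ga = 0, be = 0 & De = 1])
  /\ (al + ga = 0 -> be = 0 -> De = 1 ->
      (forall a0 : C, a0 != 0 ->
          is_ext al be ga De (std_ext a0) /\ ~ ext_trivial al be ga De (std_ext a0))
      /\ (forall dt : extdata, is_ext al be ga De dt ->
          exists a0 : C, ext_equiv al be ga De dt (std_ext a0))).
Proof.
(* Unused: the conclusion also holds for V(alpha, 0, 0). *)
move=> _.
have std_is_ext a0 : al + ga = 0 -> be = 0 -> De = 1 -> is_ext al be ga De (std_ext a0).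
  by move=> /eqP; rewrite addrC addr_eq0 => /eqP -> -> ->; apply: std_ext_is_ext.
split; [split|].
- move=> [dt [dtP dt_nontriv]].
  have [a0_eq0 | /(horner_ext_a_neq0_params dtP)] := eqVneq (ext_a dt).[ga] 0; last exact.
  by case: dt_nontriv; rewrite /ext_trivial -std_ext0 -a0_eq0; apply: ext_equiv_std.
- move=> [alga be0 De1]; exists (std_ext 1).
  by split; [apply: std_is_ext | apply: std_ext_nontrivial; apply: oner_neq0].
- move=> alga be0 De1; split=> [a0 a0_neq0 | dt dtP].
    by split; [apply: std_is_ext | apply: std_ext_nontrivial].
  by exists (ext_a dt).[ga]; apply: ext_equiv_std.
Qed.
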